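(* Let $n\ge 1$ and $k\ge 1$ be integers and let $\beta\in\mathbb{C}$. Then $$G_{(k)}(\underbrace{1,1,\dots,1}_{n}\mid \beta)=\binom{n+k-1}{k}\,{}_2F_1\!\left(\begin{matrix}k,\;1-n\\ k+1\end{matrix};-\beta\right).$$
   Context: Let $[n]=\{1,\dots,n\}$. For a partition $\lambda=(\lambda_1\ge\lambda_2\ge\cdots)$ with at most $n$ nonzero parts, identified with its Young diagram $\{(i,j): 1\le j\le\lambda_i\}$ (row index $i$ increasing downward, column index $j$ increasing to the right), a set-valued tableau of shape $\lambda$ with entries in $[n]$ assigns to every box $(i,j)$ a nonempty subset $T_{i,j}\subseteq[n]$ such that $\max T_{i,j}\le\min T_{i,j+1}$ and $\max T_{i,j}<\min T_{i+1,j}$ whenever these boxes exist. Let $\mathrm{SVT}(\lambda,n)$ be the set of these tableaux. For $T\in\mathrm{SVT}(\lambda,n)$, $|T|=\sum_{(i,j)}|T_{i,j}|$, $\omega_m(T)$ is the number of boxes whose set contains $m$, and $x^{\omega(T)}=\prod_{m=1}^n x_m^{\omega_m(T)}$. The (stable) Grothendieck polynomial is $G_\lambda(x_1,\dots,x_n\mid\beta)=\sum_{T\in\mathrm{SVT}(\lambda,n)}\beta^{|T|-|\lambda|}x^{\omega(T)}$, where $|\lambda|=\sum_i\lambda_i$. $(a)_0=1$, $(a)_m=a(a+1)\cdots(a+m-1)$. ${}_2F_1\!\left(\begin{smallmatrix}a,\,b\\ c\end{smallmatrix};z\right)=\sum_{m\ge0}\frac{(a)_m(b)_m}{(c)_m}\frac{z^m}{m!}$;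 when $b$ is a nonpositive integer this is a finite sum (a polynomial in $z$), which is the case here. *)

From HB Require Import structures.
From mathcomp Require Import all_boot all_order all_algebra.
From mathcomp Require Import reals complex.
Set Implicit Arguments. Unset Strict Implicit. Unset Printing Implicit Defensive.
Import Order.TTheory GRing.Theory Num.Theory.
Local Open Scope ring_scope.

(* Conventions: a partition la is a seq nat (la_1 >= la_2 >= ...), row i
   (0-indexed here) has length nth 0 la i.  Boxes (i,j) are 0-indexed
   pairs; box (i,j) of the paper is (i-1,j-1) here.  An entry m : 'I_n
   stands for the value m+1 of [n]; the shift preserves all comparisons. *)

Definition is_partition (la : seq nat) : bool := sorted geq la.

Definition lawidth (la : seq nat) : nat := \max_(a <- la) a.

Definition in_diag (la : seq nat) (i j : nat) : bool := (j < nth 0%N la i)%N.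

Definition filling (n : nat) (la : seq nat) :=
  {ffun 'I_(size la) * 'I_(lawidth la) -> {set 'I_n}}.

Definition setle n (A B : {set 'I_n}) : bool :=
  [forall x in A, forall y in B, (x <= y)%N].
Definition setlt n (A B : {set 'I_n}) : bool :=
  [forall x in A, forall y in B, (x < y)%N].

Definition is_svt (n : nat) (la : seq nat) (T : filling n la) : bool :=
  [forall b : 'I_(size la) * 'I_(lawidth la), in_diag la b.1 b.2 == (T b != set0)] &&
  [forall b1 : 'I_(size la) * 'I_(lawidth la), forall b2 : 'I_(size la) * 'I_(lawidth la),
     (in_diag la b1.1 b1.2 && in_diag la b2.1 b2.2) ==>
     ((((b2.1 : nat) == b1.1) && ((b2.2 : nat) == b1.2.+1)) ==> setle (T b1) (T b2)) &&
     ((((b2.1 : nat) == b1.1.+1) && ((b2.2 : nat) == b1.2)) ==> setlt (T b1) (T b2))].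

Definition svt_size n la (T : filling n la) : nat := \sum_b #|T b|.

Definition svt_omega n la (T : filling n la) (m : 'I_n) : nat :=
  #|[set b | m \in T b]|.

Definition groth {C : comRingType} (n : nat) (la : seq nat)
    (x : 'I_n -> C) (beta : C) : C :=
  \sum_(T : filling n la | is_svt T)
     beta ^+ (svt_size T - sumn la) * \prod_(m < n) x m ^+ svt_omega T m.

Definition poch {C : comRingType} (a : C) (m : nat) : C :=
  \prod_(i < m) (a + i%:R).

(* 2F1(a, -d; c; z) for d : nat (a nonpositive integer b = -d): the series
   terminates, all terms with m > d vanish since (-d)_m = 0. *)
Definition hyp2F1_negint {C : fieldType} (a : C) (d : nat) (c z : C) : C :=
  \sum_(m < d.+1)
     poch a m * poch (- d%:R) m / poch c m * z ^+ m / (m`!)%:R.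

Arguments groth {C} n la x beta.
Arguments hyp2F1_negint {C} a d c z.

From HB Require Import structures.
From mathcomp Require Import all_boot all_order all_algebra.
From mathcomp Require Import reals complex.
From mathcomp Require Import ring zify.
Set Implicit Arguments. Unset Strict Implicit. Unset Printing Implicit Defensive.
Import GRing.Theory Num.Theory.
Local Open Scope ring_scope.

(* With all x_m = 1 a one-row set-valued tableau T of length k weighs
   beta^(|T| - k).  Split off the first box by the largest entry a of its set:
   the sets with maximum a and entries >= lo are {a} together with an arbitrary
   subset of [lo, a), so summing them gives (1 + beta)^(a - lo), and the rest of
   the row is a row of length k - 1 with entries >= a.  This recursion is solved
   by sum_(j < n) C(j + k - 1, j) q^j with q = 1 + beta, the truncation of
   (1 - q)^-k.  Expanding (1 + beta)^j and applying the hockey-stick identity,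
   the coefficient of beta^m is C(n + k - 1, k + m) C(k + m - 1, m), which is
   C(n + k - 1, k) times the m-th term of the 2F1. *)

Section Pochhammer.
Variable C : comNzRingType.

Lemma poch0 (a : C) : poch a 0 = 1.
Proof. by rewrite /poch big_ord0. Qed.

Lemma pochS (a : C) m : poch a m.+1 = poch a m * (a + m%:R).
Proof. by rewrite /poch big_ord_recr. Qed.

Lemma poch_nat a m : poch (a%:R : C) m = (\prod_(i < m) (a + i))%:R.
Proof. by rewrite /poch natr_prod; apply: eq_bigr => i _; rewrite natrD. Qed.

Lemma poch_shift k m :
  poch (k%:R : C) m * (k + m)%:R = k%:R * poch (k.+1%:R : C) m.
Proof.
elim: m => [|m IH]; first by rewrite !poch0 addn0 mul1r mulr1.
rewrite !pochS -!natrD IH -!mulrA; congr (_ * (_ * _%:R)); lia.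
Qed.

Lemma poch_oppn d m : poch (- d%:R : C) m * (-1) ^+ m = (d ^_ m)%:R.
Proof.
elim: m => [|m IH]; first by rewrite poch0 mul1r ffactn0.
have -> : poch (- d%:R : C) m.+1 * (-1) ^+ m.+1 =
          poch (- d%:R) m * (-1) ^+ m * (d%:R - m%:R) by rewrite pochS exprS; ring.
rewrite IH ffactnSr natrM.
case: (leqP m d) => hmd; first by rewrite natrB.
by rewrite ffact_small // mulr0n !mul0r.
Qed.

End Pochhammer.

Lemma bin_mul_bin a b m :
  ('C(a + b, a) * 'C(a, m) = 'C(a + b, b + m) * 'C(b + m, m))%N.
Proof.
case: (leqP m a) => hma; last first.
  by rewrite (bin_small hma) muln0 bin_small ?mul0n // addnC ltn_add2l.
have fact_pos : (0 < m`! * (a - m)`! * b`!)%N by rewrite !muln_gt0 !fact_gt0.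
apply/eqP; rewrite -(eqn_pmul2r fact_pos); apply/eqP.
have hbm : (b + m <= a + b)%N by rewrite addnC leq_add2r.
have -> : ('C(a + b, a) * 'C(a, m) * (m`! * (a - m)`! * b`!) = (a + b)`!)%N.
  by rewrite -(bin_fact (leq_addr b a)) addKn -(bin_fact hma); ring.
rewrite -(bin_fact hbm) -(bin_fact (leq_addl b m)) addnK.
have -> : (a + b - (b + m) = a - m)%N by rewrite addnC subnDl.
ring.
Qed.

Lemma sum_bin_hockey K m n :
  (\sum_(j < n) 'C(j + K, K + m))%N = 'C(n + K, (K + m).+1).
Proof.
elim: n => [|n IH]; first by rewrite big_ord0 add0n bin_small // ltnS leq_addr.
by rewrite big_ord_recr /= IH addSn binS addnC.
Qed.

Lemma sum_bin_mul_bin K m n :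
  (\sum_(j < n) 'C(j + K, j) * 'C(j, m))%N = ('C(n + K, (K + m).+1) * 'C(K + m, m))%N.
Proof.
under eq_bigr => j _ do rewrite bin_mul_bin.
by rewrite -big_distrl /= sum_bin_hockey.
Qed.

Lemma exprD1n_widen (C : comNzRingType) (b : C) N j : (j <= N)%N ->
  (b + 1) ^+ j = \sum_(i < N.+1) b ^+ i *+ 'C(j, i).
Proof.
move=> hj; rewrite exprD1n (big_ord_widen N.+1 (fun i => b ^+ i *+ 'C(j, i))) //.
rewrite big_mkcond; apply: eq_bigr => i _; case: ifP => // h.
by rewrite bin_small ?mulr0n // ltnNge -ltnS h.
Qed.

Section NegativeBinomial.
Variables (C : comNzRingType) (q : C).

(* The truncation to degree < N of the power series of (1 - q)^-k. *)
Definition negbin_trunc (N k : nat) : C :=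
  \sum_(j < N) 'C(j + k - 1, j)%:R * q ^+ j.

Lemma negbin_trunc0 N : negbin_trunc N.+1 0 = 1.
Proof.
rewrite /negbin_trunc big_ord_recl big1 ?addr0 ?mulr1 // => j _.
by rewrite bin_small ?mul0r // addn0 subn1 /bump /=.
Qed.

Lemma negbin_truncSS N k :
  negbin_trunc N.+1 k.+1 = negbin_trunc N.+1 k + q * negbin_trunc N k.+1.
Proof.
rewrite /negbin_trunc !big_ord_recl big_distrr /= -addrA !add0n !bin0; congr (_ + _).
rewrite -big_split /=; apply: eq_bigr => j _.
have -> : (1 + j + k.+1 - 1 = (j + k).+1)%N by lia.
have -> : (1 + j + k - 1 = j + k)%N by lia.
have -> : (j + k.+1 - 1 = j + k)%N by lia.
by rewrite /bump /= add1n binS natrD exprS; ring.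
Qed.

Lemma negbin_trunc_conv N k :
  \sum_(t < N) q ^+ t * negbin_trunc (N - t) k = negbin_trunc N k.+1.
Proof.
elim: N => [|N IH]; first by rewrite big_ord0 /negbin_trunc big_ord0.
rewrite big_ord_recl /= expr0 mul1r subn0 negbin_truncSS; congr (_ + _).
rewrite -IH big_distrr /=; apply: eq_bigr => t _.
by rewrite /bump /= add1n subSS exprS mulrA.
Qed.

End NegativeBinomial.

Lemma hyp2F1_coef_nat N K m :
  ('C((N + K).+1, K.+1) * K.+1 * 'C(N, m))%N =
  ((K.+1 + m) * ('C((N + K).+1, (K + m).+1) * 'C(K + m, m)))%N.
Proof.
rewrite [('C(_, _) * K.+1)%N]mulnC -mul_bin_diag /= addSn mulnA -mul_bin_diag /=.
rewrite -!mulnA; congr (_ * _)%N.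
by rewrite -{1}(bin_sub (leq_addl N K)) addnK bin_mul_bin.
Qed.

Lemma hyp2F1_term (F : numFieldType) (b : F) N K m : (m <= N)%N ->
  'C((N + K).+1, K.+1)%:R *
   (poch K.+1%:R m * poch (- N%:R) m / poch (K.+1 + 1)%:R m * (- b) ^+ m / m`!%:R)
  = ('C((N + K).+1, (K + m).+1) * 'C(K + m, m))%:R * b ^+ m.
Proof.
move=> hm.
have natr_neq0 x : (0 < x)%N -> (x%:R : F) != 0 by move=> hx; rewrite pnatr_eq0 -lt0n.
have pochK2_neq0 : poch (K.+1 + 1)%:R m != 0 :> F.
  by rewrite poch_nat natr_neq0 // prodn_gt0 // => i; rewrite addn_gt0 addn1.
have pochK1 : poch K.+1%:R m = K.+1%:R * poch (K.+1 + 1)%:R m / (K.+1 + m)%:R :> F.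
  by rewrite addn1 -poch_shift mulfK // natr_neq0.
have pochN : poch (- N%:R) m * (- b) ^+ m = (N ^_ m)%:R * b ^+ m :> F.
  by rewrite exprNn mulrA poch_oppn.
have coef : ('C((N + K).+1, (K + m).+1) * 'C(K + m, m))%:R =
   ('C((N + K).+1, K.+1) * K.+1 * 'C(N, m))%:R / (K.+1 + m)%:R :> F.
  by symmetry; rewrite hyp2F1_coef_nat natrM mulrC mulKf // natr_neq0.
have -> : poch K.+1%:R m * poch (- N%:R) m / poch (K.+1 + 1)%:R m * (- b) ^+ m / m`!%:R
   = poch K.+1%:R m * (poch (- N%:R) m * (- b) ^+ m) / poch (K.+1 + 1)%:R m / m`!%:R :> F.
  by rewrite !mulrA; congr (_ * _); rewrite mulrAC.
rewrite pochN pochK1 coef -bin_ffact !natrM.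
field.
have Km_neq0 : 1 + K%:R + m%:R != 0 :> F.
  by have := natr_neq0 (1 + K + m)%N isT; rewrite !natrD.
by rewrite Km_neq0 pochK2_neq0 natr_neq0 ?fact_gt0.
Qed.

Lemma negbin_trunc_hyp2F1 (F : numFieldType) (b : F) N K :
  negbin_trunc (b + 1) N.+1 K.+1 =
  'C((N + K).+1, K.+1)%:R * hyp2F1_negint K.+1%:R N (K.+1 + 1)%:R (- b).
Proof.
rewrite /hyp2F1_negint big_distrr /=.
transitivity (\sum_(m < N.+1) ('C((N + K).+1, (K + m).+1) * 'C(K + m, m))%:R * b ^+ m);
  last by apply: eq_bigr => m _; rewrite hyp2F1_term // -ltnS.
transitivity (\sum_(j < N.+1) \sum_(m < N.+1) ('C(j + K, j) * 'C(j, m))%:R * b ^+ m).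
  apply: eq_bigr => j _; rewrite addnS subn1 /= (exprD1n_widen b (ltnSE (ltn_ord j))) big_distrr /=.
  by apply: eq_bigr => i _; rewrite natrM -mulr_natr; ring.
rewrite exchange_big /=; apply: eq_bigr => m _.
by rewrite -big_distrl /= -natr_sum sum_bin_mul_bin addSn.
Qed.

Definition ffcons (A : finType) k (a : A) (g : {ffun 'I_k -> A}) : {ffun 'I_k.+1 -> A} :=
  [ffun i => if unlift ord0 i is Some j then g j else a].

Lemma ffcons0 (A : finType) k (a : A) (g : {ffun 'I_k -> A}) : ffcons a g ord0 = a.
Proof. by rewrite ffunE unlift_none. Qed.

Lemma ffcons_lift (A : finType) k (a : A) (g : {ffun 'I_k -> A}) j :
  ffcons a g (lift ord0 j) = g j.
Proof. by rewrite ffunE liftK. Qed.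

Lemma forall_ordS k (P : pred 'I_k.+1) :
  [forall i, P i] = P ord0 && [forall j : 'I_k, P (lift ord0 j)].
Proof.
apply/forallP/andP => [H|[H0 /forallP H] i]; first by split=> //; apply/forallP.
by case: (unliftP ord0 i) => [j|] ->.
Qed.

Lemma sum_ffun_ordS (C : comNzRingType) (A : finType) k (P : pred {ffun 'I_k.+1 -> A})
    (F : {ffun 'I_k.+1 -> A} -> C) :
  \sum_(f | P f) F f = \sum_(a : A) \sum_(g | P (ffcons a g)) F (ffcons a g).
Proof.
rewrite pair_big_dep /= (reindex (fun p : A * {ffun 'I_k -> A} => ffcons p.1 p.2)) //=.
exists (fun f => (f ord0, [ffun j => f (lift ord0 j)])) => [[a g] _|f _] /=.
  by rewrite ffcons0; congr (_, _); apply/ffunP => j; rewrite ffunE ffcons_lift.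
apply/ffunP => i; rewrite ffunE.
by case: (unliftP ord0 i) => [j|] -> /=; rewrite ?ffunE.
Qed.

Lemma big_ord_range (R : Type) (idx : R) (op : Monoid.com_law idx) n lo hi (G : nat -> R) :
  (hi <= n)%N ->
  \big[op/idx]_(i < n | (lo <= i < hi)%N) G i = \big[op/idx]_(lo <= i < hi) G i.
Proof.
move=> hn; rewrite -(big_mkord (fun i => (lo <= i < hi)%N) G).
rewrite (big_nat_widen lo hi n) // (big_nat_widenl lo 0) //.
by apply: eq_bigl => i /=; rewrite andbC.
Qed.

Lemma card_ord_range n lo a : (a <= n)%N ->
  #|[set x : 'I_n | (lo <= x < a)%N]| = (a - lo)%N.
Proof.
move=> han; rewrite -sum1_card.
rewrite (eq_bigl (fun x : 'I_n => (lo <= x < a)%N)) => [|x]; last by rewrite inE.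
by rewrite (big_ord_range _ _ (fun _ => 1%N)) // sum_nat_const_nat muln1.
Qed.

Lemma sum_subset_exp (C : comNzRingType) (T : finType) (A : {set T}) (b : C) :
  \sum_(S : {set T} | S \subset A) b ^+ #|S| = (b + 1) ^+ #|A|.
Proof.
rewrite exprD1n.
transitivity (\sum_(S : {set T} | S \subset A)
                \sum_(m < #|A|.+1 | (m : nat) == #|S|) b ^+ #|S|).
  apply: eq_bigr => S hS.
  have hm : (#|S| < #|A|.+1)%N by rewrite ltnS subset_leq_card.
  by rewrite (big_pred1 (Ordinal hm)).
rewrite (exchange_big_dep xpredT) //=; apply: eq_bigr => m _.
rewrite (eq_bigr (fun _ => b ^+ m)); last by move=> S /andP[_ /eqP ->].
rewrite (eq_bigl (fun S => S \in [set S : {set T} | S \subset A & #|S| == m])).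
  by rewrite sumr_const cards_draws.
by move=> S; rewrite inE eq_sym.
Qed.

Section SetValuedRows.
Variable n : nat.
Implicit Types (S T : {set 'I_n}) (lo : nat).

Definition setmax S : nat := (\max_(x in S) x)%N.

Lemma setmax_mem S : S != set0 -> exists2 x, x \in S & setmax S = x.
Proof.
move=> S_neq0.
have [x xS ex] := eq_bigmax_cond (fun x : 'I_n => (x : nat)) (eq_ind_r is_true S_neq0 (card_gt0 S)).
by exists x.
Qed.

Lemma setle_setmax S T : S != set0 -> setle S T = [forall y in T, (setmax S <= y)%N].
Proof.
move=> /setmax_mem[x0 x0S ex].
apply/forallP/forallP => H y; apply/implyP => yT.
  by have := H x0; rewrite x0S /= => /forallP/(_ y); rewrite yT ex.
apply/forallP => z; apply/implyP => zT.
by have := H z; rewrite zT; apply: leq_trans; apply: leq_bigmax_cond.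
Qed.

Definition svt_row k (f : {ffun 'I_k -> {set 'I_n}}) : bool :=
  [forall i, f i != set0] &&
  [forall i : 'I_k, forall j : 'I_k, ((j : nat) == i.+1) ==> setle (f i) (f j)].

(* Only the first box is bounded: with svt_row the others then are too. *)
Definition row_from k lo (f : {ffun 'I_k -> {set 'I_n}}) : bool :=
  [forall i : 'I_k, ((i : nat) == 0%N) ==> [forall x in f i, (lo <= x)%N]].

Lemma svt_row_ffcons k S (g : {ffun 'I_k -> {set 'I_n}}) :
  svt_row (ffcons S g) =
  [&& S != set0, svt_row g & [forall j : 'I_k, ((j : nat) == 0%N) ==> setle S (g j)]].
Proof.
apply/idP/idP.
  move=> /andP[/forallP Hne /forallP Hc]; apply/and3P; split.
  - by have := Hne ord0; rewrite ffcons0.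
  - apply/andP; split; apply/forallP => i.
      by have := Hne (lift ord0 i); rewrite ffcons_lift.
    apply/forallP => j; apply/implyP => hji.
    have := Hc (lift ord0 i); move/forallP/(_ (lift ord0 j)).
    by rewrite !ffcons_lift !lift0 /= eqSS hji.
  - apply/forallP => j; apply/implyP => hj0.
    have := Hc ord0; move/forallP/(_ (lift ord0 j)).
    by rewrite ffcons0 ffcons_lift lift0 /= eqSS hj0.
move=> /and3P[hS /andP[/forallP hne /forallP hc] /forallP h0].
apply/andP; split.
  by apply/forallP => i; case: (unliftP ord0 i) => [j|] ->; rewrite ?ffcons_lift ?ffcons0.
apply/forallP => i; apply/forallP => j; apply/implyP.
case: (unliftP ord0 i) => [i'|] ->; case: (unliftP ord0 j) => [j'|] ->;
  rewrite ?ffcons_lift ?ffcons0 ?lift0 //= eqSS => hji.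
- by move/forallP: (hc i') => /(_ j') /implyP; apply.
- by move/implyP: (h0 j'); apply.
Qed.

Lemma row_from_ffcons k lo S (g : {ffun 'I_k -> {set 'I_n}}) :
  row_from lo (ffcons S g) = [forall x in S, (lo <= x)%N].
Proof.
rewrite /row_from forall_ordS ffcons0 /=.
by rewrite [X in _ && X](_ : _ = true) ?andbT //; apply/forallP.
Qed.

Variable C : comNzRingType.
Implicit Type b : C.

Definition row_gen k b lo : C :=
  \sum_(f : {ffun 'I_k -> {set 'I_n}} | svt_row f && row_from lo f)
     \prod_(i < k) b ^+ (#|f i|.-1).

Lemma row_gen0 b lo : row_gen 0 b lo = 1.
Proof.
rewrite /row_gen (eq_bigr (fun _ => 1)) => [|f _]; last by rewrite big_ord0.
rewrite (eq_bigl (fun f => f \in [set: {ffun 'I_0 -> {set 'I_n}}])) => [|f].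
  by rewrite sumr_const cardsT card_ffun card_ord expn0.
rewrite inE /svt_row /row_from.
by apply/andP; split; [apply/andP; split|]; apply/forallP => -[].
Qed.

Lemma row_genS k b lo :
  row_gen k.+1 b lo =
  \sum_(S : {set 'I_n} | (S != set0) && [forall x in S, (lo <= x)%N])
     b ^+ (#|S|.-1) * row_gen k b (setmax S).
Proof.
rewrite /row_gen sum_ffun_ordS (bigID (fun S => (S != set0) && [forall x in S, (lo <= x)%N])) /=.
rewrite [X in _ + X]big1 ?addr0; last first.
  move=> S hS; apply: big_pred0 => g; rewrite svt_row_ffcons row_from_ffcons.
  by case: (S != set0) hS; case: [forall x in S, _] => //=; rewrite andbF.
apply: eq_bigr => S /andP[hS hlo]; rewrite big_distrr /=.
apply: eq_big => g.
  rewrite svt_row_ffcons row_from_ffcons hS hlo /= andbT; congr (_ && _).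
  by apply: eq_forallb => j; rewrite setle_setmax.
by move=> _; rewrite big_ord_recl ffcons0; congr (_ * _); apply: eq_bigr => i _; rewrite ffcons_lift.
Qed.

(* S |-> S :\ a maps these sets bijectively onto the subsets of [lo, a). *)
Lemma sum_sets_with_max (a : 'I_n) lo b : (lo <= a)%N ->
  \sum_(S : {set 'I_n} | [&& S != set0, [forall x in S, (lo <= x)%N] & (a : nat) == setmax S])
     b ^+ (#|S|.-1) = (b + 1) ^+ (a - lo).
Proof.
move=> hlo.
rewrite (reindex_onto (fun T => a |: T) (fun S => S :\ a)) /=; last first.
  move=> S /and3P[/setmax_mem[x0 x0S ex] _ /eqP ha]; apply: setD1K.
  by have -> : a = x0 by apply: val_inj; rewrite /= ha ex.
rewrite -(card_ord_range lo (ltnW (ltn_ord a))) -sum_subset_exp.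
have anA : a \notin [set x : 'I_n | (lo <= x < a)%N] by rewrite inE ltnn andbF.
apply: eq_big => T; last first.
  by move=> /andP[_ /eqP hT]; rewrite cardsU1 -hT !inE eqxx.
apply/idP/idP.
  move=> /andP[/and3P[_ hb /eqP hm] /eqP hT].
  apply/subsetP => x xT; rewrite inE.
  have xa : x != a by move: xT; rewrite -hT !inE => /andP[].
  have xaT : x \in a |: T by rewrite in_setU1 xT orbT.
  rewrite (implyP (forallP hb x) xaT) /= ltn_neqAle val_eqE xa /= hm.
  exact: leq_bigmax_cond.
move=> hTA.
have aT : a \notin T by apply/negP => /(subsetP hTA); rewrite (negbTE anA).
rewrite setU1K // eqxx andbT; apply/and3P; split.
- by apply/set0Pn; exists a; exact: setU11.
- apply/forallP => x; apply/implyP; rewrite in_setU1 => /orP[/eqP->//|/(subsetP hTA)].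
  by rewrite inE => /andP[].
- rewrite eqn_leq; apply/andP; split; first by apply: leq_bigmax_cond; exact: setU11.
  apply/bigmax_leqP => x; rewrite in_setU1 => /orP[/eqP->//|/(subsetP hTA)].
  by rewrite inE => /andP[_ /ltnW].
Qed.

Lemma sum_sets_by_max lo b (G : nat -> C) :
  \sum_(S : {set 'I_n} | (S != set0) && [forall x in S, (lo <= x)%N]) b ^+ (#|S|.-1) * G (setmax S)
  = \sum_(a < n | (lo <= a)%N) (b + 1) ^+ (a - lo) * G a.
Proof.
transitivity (\sum_(S : {set 'I_n} | (S != set0) && [forall x in S, (lo <= x)%N])
   \sum_(a < n | (a : nat) == setmax S) b ^+ (#|S|.-1) * G (setmax S)).
  apply: eq_bigr => S /andP[/setmax_mem[x0 x0S ex] _].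
  by rewrite (big_pred1 x0) // => a; rewrite ex.
rewrite (exchange_big_dep (fun a : 'I_n => (lo <= a)%N)) /=; last first.
  move=> S a /andP[/setmax_mem[x0 x0S ex] hb] /eqP ->.
  by rewrite ex; exact: (implyP (forallP hb x0) x0S).
apply: eq_bigr => a hlo; rewrite -(sum_sets_with_max b hlo) big_distrl /=.
by apply: eq_big => [S|S /andP[_ /eqP <-]]; rewrite ?andbA.
Qed.

Lemma row_gen_negbin k b lo : (lo < n)%N -> row_gen k b lo = negbin_trunc (b + 1) (n - lo) k.
Proof.
elim: k lo => [|k IH] lo hlo.
  by rewrite -subn_gt0 in hlo; rewrite row_gen0 -(prednK hlo) negbin_trunc0.
rewrite row_genS sum_sets_by_max.
under eq_bigr => a _ do rewrite IH //.
rewrite (eq_bigl (fun a : 'I_n => (lo <= a < n)%N)) => [|a]; last by rewrite ltn_ord andbT.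
rewrite (big_ord_range _ _ (fun a => (b + 1) ^+ (a - lo) * negbin_trunc (b + 1) (n - a) k)) //.
rewrite -{1}[lo]add0n big_addn big_mkord -negbin_trunc_conv; apply: eq_bigr => i _.
by rewrite addnK addnC subnDA.
Qed.

End SetValuedRows.

Lemma lawidth1 k : lawidth [:: k] = k.
Proof. by rewrite /lawidth big_cons big_nil maxn0. Qed.

Lemma is_svt_single_row n k (f : {ffun 'I_(lawidth [:: k]) -> {set 'I_n}}) :
  is_svt ([ffun p => f p.2] : filling n [:: k]) = svt_row f.
Proof.
have in_row (j : 'I_(lawidth [:: k])) : in_diag [:: k] 0 j.
  by rewrite /in_diag /= -{2}(lawidth1 k).
apply/andP/andP => [[/forallP H1 /forallP H2]|[/forallP H1 /forallP H2]]; split.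
- apply/forallP => j; have := H1 (ord0, j).
  by rewrite ffunE (ord1 ord0) in_row => /eqP <-.
- apply/forallP => i; apply/forallP => j; apply/implyP => hji.
  have := H2 (ord0, i); move/forallP/(_ (ord0, j)).
  by rewrite /= !in_row hji /= !ffunE => /andP[].
- by apply/forallP => -[i j]; rewrite (ord1 i) in_row ffunE (H1 j).
- apply/forallP => -[i1 j1]; apply/forallP => -[i2 j2].
  rewrite (ord1 i1) (ord1 i2) /= !in_row !ffunE /= andbT; apply/implyP => h.
  by move/forallP: (H2 j1) => /(_ j2) /implyP; apply.
Qed.

Lemma groth_single_row_ones (C : comNzRingType) n k (b : C) :
  groth n [:: k] (fun _ => 1) b =
  \sum_(f : {ffun 'I_k -> {set 'I_n}} | svt_row f) b ^+ (\sum_(i < k) #|f i| - k).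
Proof.
rewrite /groth (eq_bigr (fun T => b ^+ (svt_size T - k))) => [|T _]; last first.
  by rewrite big1 ?mulr1 /= ?addn0 // => m _; rewrite expr1n.
rewrite (reindex (fun f : {ffun 'I_(lawidth [:: k]) -> {set 'I_n}} => [ffun p => f p.2])) /=;
  last first.
  exists (fun T : filling n [:: k] => [ffun j => T (ord0, j)]) => [f _|T _].
    by apply/ffunP => j; rewrite !ffunE.
  by apply/ffunP => -[i j]; rewrite !ffunE /= (ord1 i).
rewrite (eq_big (@svt_row n _) (fun f => b ^+ (\sum_(i < lawidth [:: k]) #|f i| - k)))
  => [|f|f _].
  (* lawidth [:: k] is not convertible to k, so the index type is transported. *)
  by move: (lawidth [:: k]) (lawidth1 k) => w ->.
  exact: is_svt_single_row.
rewrite /svt_size; under eq_bigr do rewrite ffunE.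
by rewrite -(pair_big xpredT xpredT (fun _ j => #|f j|)) big_ord1.
Qed.

Lemma row_gen_from0 (C : comNzRingType) n k (b : C) :
  row_gen n k b 0 = \sum_(f : {ffun 'I_k -> {set 'I_n}} | svt_row f) b ^+ (\sum_(i < k) #|f i| - k).
Proof.
apply: eq_big => [f|f /andP[/andP[/forallP f_neq0 _] _]].
  rewrite [row_from _ _](_ : _ = true) ?andbT //.
  by apply/forallP => i; apply/implyP => _; apply/forallP => x; apply/implyP.
have -> : (\sum_(i < k) #|f i| = \sum_(i < k) #|f i|.-1 + k)%N.
  rewrite -[X in (_ + X)%N]card_ord -sum1_card -big_split /=; apply: eq_bigr => i _.
  by rewrite addn1 prednK // card_gt0.
by rewrite addnK expr_sum.
Qed.

Theorem proposition3p1 (R : realType) (n k : nat) (beta : R[i]) :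
  (1 <= n)%N -> (1 <= k)%N ->
  groth n [:: k] (fun _ => 1) beta =
  ('C(n + k - 1, k))%:R *
    hyp2F1_negint (k%:R) (n - 1) ((k + 1)%:R) (- beta).
Proof.
case: n => [//|N] _; case: k => [//|K] _.
rewrite groth_single_row_ones -row_gen_from0 row_gen_negbin // subn0 negbin_trunc_hyp2F1.
have -> : (N.+1 + K.+1 - 1 = (N + K).+1)%N by lia.
by rewrite subn1.
Qed.
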